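(* Let $p>1$. For any feasible $\mathbf b$-flow $\mathbf f$, we have $\mathcal E(\mathbf f)\ge\frac1p\left(\frac{\|\mathbf b\|_\infty}n\right)^p\|\mathbf r\|_{-\infty}$.
   Context: $G=(V,E)$ is a simple undirected graph with $n$ vertices, weights $r(e)>0$, and fixed orientation $\vec E$ (with $f(j,i)=-f(i,j)$). $\mathbf b\in\mathbb R^V$ with $\sum_ib(i)=0$; a $\mathbf b$-flow has net outflow $b(i)$ at every vertex $i$. $\mathcal E(\mathbf f)=\frac1p\sum_{e\in\vec E}r(e)|f(e)|^p$. For a vector $\mathbf v$, $\|\mathbf v\|_\infty=\max_i|v(i)|$ and $\|\mathbf v\|_{-\infty}=\min_i|v(i)|$. *)

From HB Require Import structures.
From mathcomp Require Import all_boot all_order all_algebra.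
From mathcomp Require Import reals exp.
Set Implicit Arguments. Unset Strict Implicit. Unset Printing Implicit Defensive.
Import Order.TTheory GRing.Theory Num.Theory.
Local Open Scope ring_scope.

Definition oriented_simple_graph (n : nat) (E : {set 'I_n * 'I_n}) : Prop :=
  (forall e, e \in E -> e.1 != e.2) /\
  (forall i j, (i, j) \in E -> (j, i) \notin E).

Definition net_outflow {R : numDomainType} (n : nat) (E : {set 'I_n * 'I_n})
  (f : 'I_n * 'I_n -> R) (i : 'I_n) : R :=
  \sum_(e in E | e.1 == i) f e - \sum_(e in E | e.2 == i) f e.

Definition is_bflow {R : numDomainType} (n : nat) (E : {set 'I_n * 'I_n})
  (b : 'I_n -> R) (f : 'I_n * 'I_n -> R) : Prop :=
  forall i, net_outflow E f i = b i.

Definition energy {R : realType} (n : nat) (E : {set 'I_n * 'I_n})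
  (r f : 'I_n * 'I_n -> R) (p : R) : R :=
  p^-1 * \sum_(e in E) r e * powR `|f e| p.

Definition norm_inf {R : realDomainType} (n : nat) (b : 'I_n -> R) : R :=
  \big[Num.max/0]_(i < n) `|b i|.

(* ||r||_{-oo} = min_{e in E} |r(e)|  (convention: 0 if E is empty) *)
Definition norm_neginf {R : realDomainType} (n : nat) (E : {set 'I_n * 'I_n})
  (r : 'I_n * 'I_n -> R) : R :=
  if [pick e in E] is Some e0 then \big[Num.min/`|r e0|]_(e in E) `|r e|
  else 0.

(** The flow conservation law at a vertex [i] with [|b i| = ||b||_oo] writes
    [b i] as a signed sum of the flows on the (at most [n]) edges incident to
    [i]; since each unordered pair carries at most one oriented edge, some
    edge carries [|f e| >= ||b||_oo / n].  That single edge already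
    contributes [r e |f e|^p / p >= ||r||_{-oo} (||b||_oo / n)^p / p] to the
    energy, all other terms being nonnegative. *)
From HB Require Import structures.
From mathcomp Require Import all_boot all_order all_algebra.
From mathcomp Require Import reals exp.
Import Order.TTheory GRing.Theory Num.Theory.
Local Open Scope ring_scope.

Section IncidentEdges.

Context {R : numDomainType} {n : nat} (E : {set 'I_n * 'I_n}).

Lemma big_out_edges (F : 'I_n * 'I_n -> R) (i : 'I_n) :
  \sum_(e in E | e.1 == i) F e = \sum_(j < n) (if (i, j) \in E then F (i, j) else 0).
Proof.
rewrite big_mkcond /=.
transitivity (\sum_(a < n) \sum_(c < n)
   (if ((a, c) \in E) && (a == i) then F (a, c) else 0)).
  by rewrite pair_big /=; apply: eq_bigr; case.
rewrite (bigD1 i) //= [X in _ + X]big1 ?addr0; last first.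
  by move=> a /negbTE Hai; apply: big1 => j _; rewrite Hai andbF.
by apply: eq_bigr => j _; rewrite eqxx andbT.
Qed.

Lemma big_in_edges (F : 'I_n * 'I_n -> R) (i : 'I_n) :
  \sum_(e in E | e.2 == i) F e = \sum_(j < n) (if (j, i) \in E then F (j, i) else 0).
Proof.
rewrite big_mkcond /=.
transitivity (\sum_(a < n) \sum_(c < n)
   (if ((a, c) \in E) && (c == i) then F (a, c) else 0)).
  by rewrite pair_big /=; apply: eq_bigr; case.
apply: eq_bigr => a _.
rewrite (bigD1 i) //= big1 ?addr0; last by move=> c /negbTE ->; rewrite andbF.
by rewrite eqxx andbT.
Qed.

Lemma norm_net_outflow_le (f : 'I_n * 'I_n -> R) (i : 'I_n) :
  `|net_outflow E f i| <= \sum_(j < n)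
     ((if (i, j) \in E then `|f (i, j)| else 0) +
      (if (j, i) \in E then `|f (j, i)| else 0)).
Proof.
rewrite big_split /= -(big_out_edges (fun e => `|f e|)) -(big_in_edges (fun e => `|f e|)).
apply: le_trans (ler_normB _ _) _.
exact: lerD (ler_norm_sum _ _ _) (ler_norm_sum _ _ _).
Qed.

End IncidentEdges.

Lemma exists_heavy_edge {R : realFieldType} {n : nat} {E : {set 'I_n * 'I_n}}
    {f : 'I_n * 'I_n -> R} {i : 'I_n} :
  (forall j k, (j, k) \in E -> (k, j) \notin E) ->
  0 < `|net_outflow E f i| ->
  exists2 e, e \in E & `|net_outflow E f i| / n%:R <= `|f e|.
Proof.
move=> Eanti out_gt0; set c := `|net_outflow E f i| / n%:R.
have n_gt0 : (0 < n)%N by apply: leq_ltn_trans (ltn_ord i).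
have c_gt0 : 0 < c by rewrite divr_gt0 ?ltr0n.
apply/exists_inP; apply: contraTT isT => /exists_inPn light.
have {}light e : e \in E -> `|f e| < c by move=> /light; rewrite ltNge.
suff : `|net_outflow E f i| < `|net_outflow E f i| by rewrite ltxx.
apply: le_lt_trans (norm_net_outflow_le E f i) _.
apply: (@lt_le_trans _ _ (\sum_(j < n) c)); last first.
  by rewrite sumr_const card_ord -mulr_natr divfK ?pnatr_eq0 -?lt0n.
apply: ltr_sum => [|j _]; first by apply/hasP; exists i; rewrite ?mem_index_enum.
case Eij: ((i, j) \in E); case Eji: ((j, i) \in E).
- by have := Eanti _ _ Eij; rewrite Eji.
- by rewrite addr0 light.
- by rewrite add0r light.
- by rewrite addr0.
Qed.

Lemma norm_inf_ge0 {R : realDomainType} {n : nat} (b : 'I_n -> R) :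
  0 <= norm_inf b.
Proof. by rewrite /norm_inf; elim/big_ind: _ => // x y; rewrite le_max => ->. Qed.

Lemma norm_inf_attained {R : realDomainType} {n : nat} (b : 'I_n -> R) :
  0 < norm_inf b -> exists i, norm_inf b = `|b i|.
Proof.
rewrite /norm_inf; case: n b => [|n] b; first by rewrite big_ord0 ltxx.
move=> _; have [i _ ->] := eq_bigmax ord0 xpredT (fun i => `|b i|) isT
  (fun i _ => normr_ge0 (b i)).
by exists i.
Qed.

Lemma norm_neginf_ge0 {R : realDomainType} {n : nat} (E : {set 'I_n * 'I_n})
    (r : 'I_n * 'I_n -> R) :
  0 <= norm_neginf E r.
Proof. by rewrite /norm_neginf; case: pickP => // e0 _; apply: le_bigmin. Qed.

Lemma norm_neginf_le {R : realDomainType} {n : nat} (E : {set 'I_n * 'I_n})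
    (r : 'I_n * 'I_n -> R) (e : 'I_n * 'I_n) :
  e \in E -> norm_neginf E r <= `|r e|.
Proof.
rewrite /norm_neginf => Ee; case: pickP => [e0 _|/(_ e)]; last by rewrite Ee.
exact: bigmin_le_cond.
Qed.

Section Energy.

Context {R : realType} {n : nat} {E : {set 'I_n * 'I_n}} {r f : 'I_n * 'I_n -> R} {p : R}.
Hypotheses (r_ge0 : forall e, e \in E -> 0 <= r e) (p_gt0 : 0 < p).

Lemma energy_ge0 : 0 <= energy E r f p.
Proof.
rewrite /energy mulr_ge0 ?invr_ge0 ?(ltW p_gt0) //.
by apply: sumr_ge0 => e Ee; rewrite mulr_ge0 ?powR_ge0 ?r_ge0.
Qed.

Lemma energy_ge_edge e : e \in E -> p^-1 * (r e * powR `|f e| p) <= energy E r f p.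
Proof.
move=> Ee; rewrite /energy ler_pM2l ?invr_gt0 // (bigD1 e) //= lerDl.
by apply: sumr_ge0 => e' /andP[Ee' _]; rewrite mulr_ge0 ?powR_ge0 ?r_ge0.
Qed.

End Energy.

Theorem mainTheorem19 (R : realType) (n : nat) (E : {set 'I_n * 'I_n})
  (r : 'I_n * 'I_n -> R) (b : 'I_n -> R) (p : R) (f : 'I_n * 'I_n -> R) :
  oriented_simple_graph E ->
  (forall e, e \in E -> 0 < r e) ->
  \sum_(i < n) b i = 0 ->
  1 < p ->
  is_bflow E b f ->
  energy E r f p >= p^-1 * powR (norm_inf b / n%:R) p * norm_neginf E r.
Proof.
move=> [_ Eanti] r_gt0 _ p_gt1 bflow.
have p_gt0 : 0 < p by apply: lt_trans p_gt1.
have r_ge0 e : e \in E -> 0 <= r e by move/r_gt0/ltW.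
have [b0|b_neq0] := eqVneq (norm_inf b) 0.
  by rewrite b0 mul0r powR0 ?gt_eqF // mulr0 mul0r (energy_ge0 r_ge0 p_gt0).
have b_gt0 : 0 < norm_inf b by rewrite lt_def b_neq0 norm_inf_ge0.
have [i bi] := norm_inf_attained b b_gt0.
have out_gt0 : 0 < `|net_outflow E f i| by rewrite bflow -bi.
have [e Ee] := exists_heavy_edge Eanti out_gt0; rewrite bflow -bi => heavy.
apply: le_trans (energy_ge_edge r_ge0 p_gt0 e Ee).
rewrite -mulrA ler_pM2l ?invr_gt0 // mulrC.
apply: ler_pM; rewrite ?powR_ge0 ?norm_neginf_ge0 //.
  by rewrite -(gtr0_norm (r_gt0 _ Ee)) norm_neginf_le.
apply: ge0_ler_powR heavy; first exact: ltW.
  by rewrite nnegrE divr_ge0 ?norm_inf_ge0.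
by rewrite nnegrE.
Qed.
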